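(* Let $N_R\ge1$ and $N_s\ge2$ be integers and $\gamma>0$. Let $\Omega$ be an angular interval, $p$ a probability density on $\Omega$, and $\eta:\Omega\to(0,\infty)$ a measurable function (not depending on $L$). For each positive integer $L$ and $\phi\in\Omega$ let $p_{miss}(\phi)=\Pr\{X_{L,\phi}\le(N_s-1)\gamma\}$ where $X_{L,\phi}\sim\mathcal{F}(2N_RL,\,2N_RL(N_s-1),\,L\eta(\phi))$, and let $\bar p_{miss}=\int_\Omega p_{miss}(\phi)p(\phi)\,d\phi$. If there exist $\Omega^-\subset\Omega$ and $\eta^->0$ such that $\eta(\phi)\le\eta^-$ for all $\phi\in\Omega^-$ and $\int_{\Omega^-}p(\phi)\,d\phi>0$, then $$\lim_{L\to\infty}-\frac1L\log\bar p_{miss}\le I^*(\eta^-,\gamma)\qquad\text{if }\gamma<\frac{2N_R+\eta^-}{2N_R(N_s-1)},$$ where for $\eta>0$, $$I^*(\eta,\gamma)=\frac{\eta}{2}\left(1-\frac{\gamma v^*}{N_R+\sqrt{N_R^2+\gamma\eta v^*}}\right)+N_R(N_s-1)\log\frac{2N_R(N_s-1)}{v^*}-N_R\log\frac{\gamma v^*}{N_R+\sqrt{N_R^2+\gamma\eta v^*}},$$ with $v^*=\frac{x^{*2}-N_R^2}{\eta\gamma}$ and $x^*>0$ a solution of $\frac{\gamma+1}{\eta\gamma}(x^2-N_R^2)-x-N_R-2N_R(N_s-1)=0$.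
   Context: $\mathcal{F}(n_1,n_2,\lambda)$ denotes the noncentral F-distribution with degrees of freedom $n_1,n_2$ and noncentrality $\lambda$, i.e. the law of $(X_1/n_1)/(X_2/n_2)$ with $X_1$ noncentral chi-square ($n_1$ degrees of freedom, noncentrality $\lambda$) and $X_2$ an independent central chi-square with $n_2$ degrees of freedom. In the application, $\eta(\phi)$ is the normalised noncentrality parameter (proportional to the average transmit beamforming gain in direction $\phi$ divided by the path loss) of a user in direction $\phi$, $p_{miss}(\phi)$ is its miss-detection probability for the GLRT statistic with threshold $\gamma$, and $\bar p_{miss}$ is the average miss-detection probability over user directions. *)

From HB Require Import structures.
From mathcomp Require Import all_boot all_order all_algebra.
From mathcomp Require Import all_classical all_reals all_analysis.
Set Implicit Arguments. Unset Strict Implicit. Unset Printing Implicit Defensive.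
Import Order.TTheory GRing.Theory Num.Theory.
Import numFieldNormedType.Exports.
Local Open Scope classical_set_scope.
Local Open Scope ring_scope.

Section NoncentralF.
Variable R : realType.
Local Notation mu := (@lebesgue_measure R).

Definition Gamma_fn (a : R) : R :=
  fine (\int[mu]_(x in `]0%R, +oo[) ((x `^ (a - 1)) * expR (- x))%:E)%E.

Definition chi2_pdf (k : nat) (x : R) : R :=
  if 0 < x then
    x `^ (k%:R / 2 - 1) * expR (- x / 2) / (2 `^ (k%:R / 2) * Gamma_fn (k%:R / 2))
  else 0.

(* density of the noncentral chi-square law with k degrees of freedom and
   noncentrality lam (= sum of the squared means): Poisson(lam/2) mixture of
   central chi-square densities with k + 2j degrees of freedom *)
Definition ncchi2_pdf (k : nat) (lam : R) (x : R) : \bar R :=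
  (\sum_(0 <= j <oo)
     ((expR (- lam / 2) * (lam / 2) ^+ j / (j`!)%:R) * chi2_pdf (k + 2 * j) x)%:E)%E.

(* CDF of the noncentral F law F(n1, n2, lam) at t, i.e.
   Pr{ (X1/n1)/(X2/n2) <= t } with X1 ~ noncentral chi2(n1, lam) and
   X2 ~ central chi2(n2) independent (joint density = product). *)
Definition ncF_cdf (n1 n2 : nat) (lam t : R) : \bar R :=
  (\int[mu]_(y in `]0%R, +oo[)
     ((chi2_pdf n2 y)%:E *
      \int[mu]_(x in [set x : R | (0 < x)%R /\ ((x / n1%:R) / (y / n2%:R) <= t)%R])
         ncchi2_pdf n1 lam x))%E.

Definition p_miss (NR Ns L : nat) (gamma eta_phi : R) : \bar R :=
  ncF_cdf (2 * NR * L) (2 * NR * L * (Ns - 1)) (L%:R * eta_phi) ((Ns - 1)%:R * gamma).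

Definition pbar_miss (NR Ns L : nat) (gamma : R) (Omega : set R) (p eta : R -> R)
  : \bar R :=
  (\int[mu]_(phi in Omega) (p_miss NR Ns L gamma (eta phi) * (p phi)%:E))%E.

Definition Istar (NR Ns : nat) (eta gamma xs : R) : R :=
  let vs := (xs ^+ 2 - NR%:R ^+ 2) / (eta * gamma) in
  let q := gamma * vs / (NR%:R + Num.sqrt (NR%:R ^+ 2 + gamma * eta * vs)) in
  eta / 2 * (1 - q)
  + NR%:R * (Ns - 1)%:R * ln (2 * NR%:R * (Ns - 1)%:R / vs)
  - NR%:R * ln q.

End NoncentralF.

From HB Require Import structures.
From mathcomp Require Import all_boot all_order all_algebra.
From mathcomp Require Import all_classical all_reals all_analysis.
From mathcomp Require Import ring lra.
From mathcomp Require Import measurable_realfun.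
Import Order.TTheory GRing.Theory Num.Theory.
Import numFieldNormedType.Exports.
Local Open Scope classical_set_scope.
Local Open Scope ring_scope.

(* Keeping a single term of the Poisson mixture defining the noncentral
   chi-square density and restricting the double integral defining the
   noncentral F CDF to a unit box around a suitable point (x0, y0) gives
   p_miss >= exp (- L ld_rate - O(log L)), where ld_rate is the sum of the
   exponential rates of the Poisson weight and of the two chi-square densities
   at that point (the Gamma function and the factorial only enter through
   Stirling-type bounds).  The point is admissible when the box lies in the
   miss region; for rho = eta / (x^* - N_R) and sig = v^* / (2 N_R (N_s - 1))
   this constraint is tight and the rate is I^*(eta, gamma).  The rate
   increases with eta, so the bound holds uniformly on Omega^-, whose p-mass is
   positive, and -log pbar_miss <= L I^* + o(L). *)

Section integral_lower_bounds.
Local Open Scope ereal_scope.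
Context d (T : measurableType d) (R : realType) (mu : {measure set T -> \bar R}).

(* No measurability is needed: the integral of a nonnegative function is a
   supremum over the simple functions below it. *)
Lemma ge0_le_integral_nomeas (D : set T) (f g : T -> \bar R) :
  (forall x, D x -> 0 <= f x) -> (forall x, D x -> f x <= g x) ->
  \int[mu]_(x in D) f x <= \int[mu]_(x in D) g x.
Proof.
move=> f0 fg; rewrite (integral_mkcond D f) (integral_mkcond D g).
have f0' x : 0 <= (f \_ D) x by rewrite /patch; case: ifP => // /[!inE] /f0.
have fg' x : (f \_ D) x <= (g \_ D) x by rewrite /patch; case: ifP => // /[!inE] /fg.
have g0' x : 0 <= (g \_ D) x by exact: le_trans (f0' x) (fg' x).
rewrite !ge0_integralTE //; apply: ereal_sup_le => _ [h /= hf <-].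
by exists h => //= x; exact: le_trans (hf x) (fg' x).
Qed.

Lemma mul_measure_le_integral (D A : set T) (f : T -> \bar R) (c : R) :
  measurable A -> A `<=` D -> (forall x, D x -> 0 <= f x) -> (0 <= c)%R ->
  (forall x, A x -> c%:E <= f x) -> c%:E * mu A <= \int[mu]_(x in D) f x.
Proof.
move=> mA AD f0 c0 cf; rewrite -integral_cst // integral_mkcond [leRHS]integral_mkcond.
apply: ge0_le_integral_nomeas => x _; rewrite /patch.
  by case: ifP => //; rewrite lee_fin.
case: ifP => [/[!inE] Ax|_]; first by rewrite ifT ?inE; [exact: cf | exact: AD].
by case: ifP => // /[!inE] /f0.
Qed.

End integral_lower_bounds.

Section estimates.
Context {R : realType}.
Local Notation mu := (@lebesgue_measure R).

Lemma le_integral_itv1 (D : set R) (f : R -> \bar R) (a c : R) :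
  0 <= c -> (forall x, D x -> (0 <= f x)%E) ->
  (forall x, a <= x <= a + 1 -> D x) -> (forall x, a <= x <= a + 1 -> (c%:E <= f x)%E) ->
  (c%:E <= \int[mu]_(x in D) f x)%E.
Proof.
move=> c0 f0 aD cf.
have mu1 : mu `[a, a + 1] = 1%E.
  by rewrite lebesgue_measure_itv /= lte_fin ltrDl ltr01 -EFinB addrC addKr.
rewrite -[c%:E]mule1 -mu1.
apply: mul_measure_le_integral; [exact: measurable_itv | | exact: f0 | exact: c0 |].
- by move=> x /=; rewrite in_itv /=; exact: aD.
- by move=> x /=; rewrite in_itv /=; exact: cf.
Qed.

Definition ln_gap (s : R) := s - 1 - ln s.

Lemma ln_gap_ge0 (s : R) : 0 < s -> 0 <= ln_gap s.
Proof.
move=> s0; have := @le_ln1Dx R (s - 1); rewrite [1 + _]addrC subrK /ln_gap => H.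
by have := H ltac:(lra); lra.
Qed.

Lemma ln_le_mul (eps z : R) : 0 < eps -> 0 < z -> ln z <= eps * z - 1 - ln eps.
Proof.
move=> eps0 z0; have := @ln_gap_ge0 (eps * z) (mulr_gt0 eps0 z0).
by rewrite /ln_gap lnM ?posrE //; lra.
Qed.

Lemma powR_expR (x r : R) : 0 < x -> x `^ r = expR (r * ln x).
Proof. by move=> x0; rewrite /powR gt_eqF. Qed.

Lemma Gamma_integral_ge (h : R) : 1 <= h ->
  ((expR (-2))%:E <= \int[mu]_(x in `]0%R, +oo[) ((x `^ (h - 1)) * expR (- x))%:E)%E.
Proof.
move=> h1; apply: (@le_integral_itv1 _ _ 1); first exact: expR_ge0.
- by move=> x _; rewrite lee_fin mulr_ge0 ?powR_ge0 ?expR_ge0.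
- by move=> x /andP[x1 _] /=; rewrite in_itv /= andbT; lra.
move=> x /andP[x1 x2]; rewrite lee_fin powR_expR; last lra.
rewrite -[expR (-2)]mul1r ler_pM ?expR_ge0 //; last by rewrite ler_expR; lra.
by rewrite -[leLHS]expR0 ler_expR mulr_ge0 ?subr_ge0 ?ln_ge0.
Qed.

(* Comparison with the exponential density of mean h: by concavity of ln,
   x^(h-1) e^(-x (1 - 1/h)) <= (h/e)^(h-1). *)
Lemma Gamma_integral_le (h : R) : 1 <= h ->
  (\int[mu]_(x in `]0%R, +oo[) ((x `^ (h - 1)) * expR (- x))%:E
   <= (expR (h * ln h - h + 1))%:E)%E.
Proof.
move=> h1; have h0 : 0 < h by lra.
set C := expR ((h - 1) * ln h - (h - 1)).
have Ch : C * h = expR (h * ln h - h + 1).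
  by rewrite /C -[X in _ * X](@lnK R h) ?posrE // -expRD; congr expR; ring.
have hi : 0 < h^-1 by rewrite invr_gt0.
rewrite -Ch -[(C * h)%:E]mule1 -(integral_exponential_pdf hi) -ge0_integralZl //=;
  first last.
- by rewrite lee_fin mulr_ge0 ?expR_ge0 ?(ltW h0).
- by move=> x _; rewrite lee_fin exponential_pdf_ge0 ?(ltW hi).
- by apply/measurable_EFinP; exact: measurable_exponential_pdf.
rewrite [leLHS]integral_mkcond /=.
apply: ge0_le_integral_nomeas => x _; rewrite /patch.
  by case: ifP => // _; rewrite lee_fin mulr_ge0 ?powR_ge0 ?expR_ge0.
case: ifP => [/[!inE] /=|_]; last first.
  by rewrite -EFinM lee_fin !mulr_ge0 ?exponential_pdf_ge0 ?expR_ge0 ?(ltW hi) ?(ltW h0).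
rewrite in_itv /= andbT => x0.
rewrite -EFinM lee_fin exponential_pdfE; last exact: ltW.
rewrite powR_expR // /C mulrA mulfK ?gt_eqF // -!expRD ler_expR.
have := ln_le_mul (h^-1) x hi x0; rewrite lnV ?posrE // => lnx.
have : (h - 1) * ln x <= (h - 1) * (h^-1 * x - 1 + ln h) by rewrite ler_wpM2l //; lra.
have -> : (h - 1) * (h^-1 * x - 1 + ln h) = x - h^-1 * x - (h - 1) + (h - 1) * ln h.
  by field; rewrite gt_eqF.
lra.
Qed.

Lemma Gamma_fn_bounds (h : R) : 1 <= h -> 0 < Gamma_fn h <= expR (h * ln h - h + 1).
Proof.
move=> h1; have := Gamma_integral_ge h h1; have := Gamma_integral_le h h1.
rewrite /Gamma_fn; case: (\int[mu]_(x in _) _)%E => [r| |] //=; rewrite !lee_fin.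
by move=> -> lo; rewrite andbT (lt_le_trans _ lo) ?expR_gt0.
Qed.

Lemma chi2_pdf_ge0 (k : nat) (x : R) : 0 <= chi2_pdf k x.
Proof.
rewrite /chi2_pdf; case: ifP => // _.
have G0 : 0 <= Gamma_fn (k%:R / 2 : R).
  apply: fine_ge0; apply: integral_ge0 => y _.
  by rewrite lee_fin mulr_ge0 ?powR_ge0 ?expR_ge0.
by rewrite divr_ge0 ?mulr_ge0 ?powR_ge0 ?expR_ge0.
Qed.

Lemma chi2_pdf_ge (k : nat) (h x : R) : k%:R = 2 * h -> 1 <= h -> 0 < x ->
  expR ((h - 1) * ln x - x / 2 - h * ln 2 - (h * ln h - h + 1)) <= chi2_pdf k x.
Proof.
move=> kh h1 x0; rewrite /chi2_pdf x0.
have -> : k%:R / 2 = h by rewrite kh; field.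
have /andP[G0 GB] := Gamma_fn_bounds h h1.
rewrite !powR_expR // ler_pdivlMr; last by rewrite mulr_gt0 ?expR_gt0.
apply: le_trans (_ : _ <= expR ((h - 1) * ln x - x / 2 - h * ln 2 - (h * ln h - h + 1))
   * (expR (h * ln 2) * expR (h * ln h - h + 1))) _.
  by rewrite ler_wpM2l ?expR_ge0 // ler_wpM2l ?expR_ge0.
by rewrite -!expRD le_eqVlt; apply/orP; left; apply/eqP; congr expR; ring.
Qed.

Lemma chi2_pdf_ge_right (k : nat) (h sig y : R) : k%:R = 2 * h -> 1 <= h -> 0 < sig ->
  2 * h * sig <= y <= 2 * h * sig + 1 ->
  expR (- (h * ln_gap sig) - ln (2 * h * sig) - 3 / 2) <= chi2_pdf k y.
Proof.
move=> kh h1 s0 /andP[yl yu].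
have y0 : 0 < 2 * h * sig by rewrite !mulr_gt0 //; lra.
apply: le_trans _ (chi2_pdf_ge k h y kh h1 (lt_le_trans y0 yl)); rewrite ler_expR.
have lny : (h - 1) * ln (2 * h * sig) <= (h - 1) * ln y.
  by rewrite ler_wpM2l ?ler_ln ?posrE //; lra.
have ln2hs : ln (2 * h * sig) = ln 2 + ln h + ln sig by rewrite !lnM ?posrE //; lra.
rewrite ln2hs in lny *; rewrite /ln_gap; lra.
Qed.

(* The window sits left of 2h/rho so that the box of [p_miss_ge_box] stays in
   the miss region; rho + 1 <= h keeps the logarithmic loss across it below rho. *)
Lemma chi2_pdf_ge_left (k : nat) (h rho x : R) : k%:R = 2 * h -> 0 < rho -> rho + 1 <= h ->
  2 * h / rho - 1 <= x <= 2 * h / rho ->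
  expR (- (h * ln_gap rho^-1) - ln (2 * h / rho) - rho - 1) <= chi2_pdf k x.
Proof.
move=> kh r0 hr /andP[xl xu]; set x0 := 2 * h / rho in xl xu *.
have h1 : 1 <= h by lra.
have h0 : 0 < h by lra.
have rx0 : rho * x0 = 2 * h by rewrite /x0; field; rewrite gt_eqF.
have x01 : 1 < x0 by rewrite -(ltr_pM2l r0) mulr1 rx0; lra.
apply: le_trans _ (chi2_pdf_ge k h x kh h1 (_ : 0 < x)); last lra; rewrite ler_expR.
have lnx : ln (x0 - 1) <= ln x by rewrite ler_ln ?posrE //; lra.
have lnx0 : ln x0 <= ln (x0 - 1) + ((x0 - 1)^-1 * x0 - 1).
  by have := ln_le_mul (x0 - 1)^-1 x0 ltac:(rewrite invr_gt0; lra) ltac:(lra);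
     rewrite lnV ?posrE; lra.
have slope : (h - 1) * ((x0 - 1)^-1 * x0 - 1) <= rho.
  have -> : (x0 - 1)^-1 * x0 - 1 = (x0 - 1)^-1 by field; rewrite gt_eqF ?subr_gt0.
  by rewrite ler_pdivrMr ?subr_gt0 //; lra.
have : (h - 1) * ln x0 - rho <= (h - 1) * ln x.
  have hm : 0 <= h - 1 by lra.
  by have := ler_wpM2l hm lnx; have := ler_wpM2l hm lnx0; nra.
have -> : ln x0 = ln 2 + ln h - ln rho by rewrite /x0 ln_div ?posrE ?mulr_gt0 // lnM ?posrE.
rewrite /ln_gap lnV ?posrE //.
have : rho^-1 * rho = 1 by rewrite mulVf ?gt_eqF.
have : x0 = 2 * h * rho^-1 by [].
lra.
Qed.

Lemma fact_le_expR (j : nat) : (j`!)%:R <= expR ((j%:R + 1) * ln (j%:R + 1) - j%:R) :> R.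
Proof.
elim: j => [|j IH]; first by rewrite fact0 add0r ln1 mulr0 subr0 expR0.
rewrite factS natrM; apply: le_trans (ler_wpM2l (ler0n _ _) IH) _.
set m : R := j%:R; have m0 : 0 <= m by exact: ler0n.
rewrite -natr1 -/m -[X in X * _](@lnK R (m + 1)) ?posrE; last lra.
rewrite -expRD ler_expR -addrA.
have := ln_le_mul (m + 2)^-1 (m + 1) ltac:(rewrite invr_gt0; lra) ltac:(lra).
rewrite lnV ?posrE; last lra.
have -> : (m + 2)^-1 * (m + 1) = 1 - (m + 2)^-1 by field; lra.
move=> H; have : 1 <= (m + 2) * (ln (m + 2) - ln (m + 1)).
  by rewrite -ler_pdivrMl ?div1r; lra.
have -> : (1 + 1 : R) = 2 by [].
nra.
Qed.

Lemma poisson_pmf_ge (mu rho : R) (j : nat) : 0 < mu -> 0 < rho ->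
  j%:R <= mu / rho < j%:R + 1 ->
  expR (- (mu / rho * ln_gap rho) - `|ln rho| - 2 - ln (mu / rho + 1)) <= poisson_pmf mu j.
Proof.
move=> mu0 r0 /andP[jl ju]; set t := mu / rho in jl ju *.
have t0 : 0 < t by rewrite divr_gt0.
have muE : mu = rho * t by rewrite /t mulrC mulfVK ?gt_eqF.
have jt : ln (j%:R + 1) <= ln (t + 1) by rewrite ler_ln ?posrE; lra.
have jlnt : j%:R * ln (j%:R + 1) <= 1 + j%:R * ln t.
  have := ln_le_mul t^-1 (j%:R + 1) ltac:(rewrite invr_gt0 //) ltac:(lra).
  rewrite lnV ?posrE // opprK => H; have j0 : 0 <= j%:R :> R by exact: ler0n.
  have := ler_wpM2l j0 H; have : j%:R * (t^-1 * (j%:R + 1)) <= j%:R + 1.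
    rewrite mulrA -[leRHS]mul1r ler_pM2r; last lra.
    by rewrite ler_pdivrMr // mul1r.
  lra.
have jlnr : t * ln rho - `|ln rho| <= j%:R * ln rho.
  by case: (lerP 0 (ln rho)) => lr; [rewrite ger0_norm | rewrite ltr0_norm]; nra.
rewrite /poisson_pmf mu0 -powR_mulrn; last exact: ltW.
rewrite powR_expR //.
apply: le_trans (_ : _ <= expR (j%:R * ln mu) * expR (- ((j%:R + 1) * ln (j%:R + 1) - j%:R))
                          * expR (- mu)) _; last first.
  rewrite ler_wpM2r ?expR_ge0 // ler_wpM2l ?expR_ge0 // expRN.
  by rewrite lef_pV2 ?posrE ?expR_gt0 ?ltr0n ?fact_gt0 // fact_le_expR.
rewrite -!expRD ler_expR muE lnM ?posrE // /ln_gap; nra.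
Qed.

Lemma ncchi2_weightE (lam : R) (j : nat) : 0 < lam ->
  expR (- lam / 2) * (lam / 2) ^+ j / (j`!)%:R = poisson_pmf (lam / 2) j.
Proof. by move=> lam0; rewrite /poisson_pmf divr_gt0 //= mulNr; ring. Qed.

Lemma ncchi2_pdf_ge0 (k : nat) (lam x : R) : 0 <= lam -> (0 <= ncchi2_pdf k lam x)%E.
Proof.
move=> lam0; apply: nneseries_ge0 => n _ _.
by rewrite lee_fin mulr_ge0 ?chi2_pdf_ge0 ?divr_ge0 ?mulr_ge0 ?expR_ge0 ?exprn_ge0 ?divr_ge0.
Qed.

Lemma ncchi2_pdf_ge_term (k j : nat) (lam x : R) : 0 < lam ->
  ((poisson_pmf (lam / 2) j * chi2_pdf (k + 2 * j) x)%:E <= ncchi2_pdf k lam x)%E.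
Proof.
move=> lam0; have w0 n : (0 <= (expR (- lam / 2) * (lam / 2) ^+ n / (n`!)%:R
                                   * chi2_pdf (k + 2 * n) x)%:E)%E.
  by rewrite ncchi2_weightE // lee_fin mulr_ge0 ?poisson_pmf_ge0 ?chi2_pdf_ge0.
apply: le_trans (nneseries_lim_ge j.+1 (fun n _ _ => w0 n)).
rewrite big_nat_recr //= -ncchi2_weightE //; apply: lee_paddl => //.
by apply: sume_ge0 => n _.
Qed.

Lemma ncF_cdf_ge_box (n1 n2 : nat) (lam t x0 y0 a b : R) :
  (0 < n1)%N -> (0 < n2)%N -> 0 <= lam -> 1 < x0 -> 0 < y0 -> 0 <= a -> 0 <= b ->
  x0 * n2%:R <= t * n1%:R * y0 ->
  (forall y, y0 <= y <= y0 + 1 -> a <= chi2_pdf n2 y) ->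
  (forall x, x0 - 1 <= x <= x0 -> (b%:E <= ncchi2_pdf n1 lam x)%E) ->
  ((a * b)%:E <= ncF_cdf n1 n2 lam t)%E.
Proof.
move=> n1_gt0 n2_gt0 lam0 x01 y0_gt0 a0 b0 box chi2_ge ncchi2_ge.
have n1p : 0 < n1%:R :> R by rewrite ltr0n.
have n2p : 0 < n2%:R :> R by rewrite ltr0n.
apply: (@le_integral_itv1 _ _ y0); first exact: mulr_ge0.
- move=> y _; apply: mule_ge0; first by rewrite lee_fin chi2_pdf_ge0.
  by apply: integral_ge0 => x _; exact: ncchi2_pdf_ge0.
- by move=> y /andP[y0y _] /=; rewrite in_itv /= andbT; lra.
move=> y /andP[y0y yy0]; rewrite EFinM; apply: lee_pmul; rewrite ?lee_fin //.
  by apply: chi2_ge; rewrite y0y yy0.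
apply: (@le_integral_itv1 _ _ (x0 - 1)) => //.
- by move=> x _; exact: ncchi2_pdf_ge0.
- move=> x /andP[xl xu]; split; first lra.
  have y0p : 0 < y by lra.
  have -> : x / n1%:R / (y / n2%:R) = x * n2%:R / (y * n1%:R).
    by field; rewrite !gt_eqF.
  rewrite ler_pdivrMr ?mulr_gt0 //.
  have : x * n2%:R <= x0 * n2%:R by rewrite ler_pM2r //; lra.
  have : t * n1%:R * y0 <= t * n1%:R * y.
    rewrite ler_wpM2l //; have : 0 < t * n1%:R * y0 by apply: lt_le_trans box; nra.
    by rewrite pmulr_lgt0 // => /ltW.
  lra.
- by move=> x xx; apply: ncchi2_ge; lra.
Qed.

(* Exponential rate of the three factors of the density at the dominating point:
   the Poisson index near eta L / (2 rho), the numerator chi-square at scale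
   rho^-1 and the denominator chi-square at scale sig. *)
Definition ld_rate (N M rho sig eta : R) :=
  eta / (2 * rho) * ln_gap rho + (N + eta / (2 * rho)) * ln_gap rho^-1
  + N * M * ln_gap sig.

Definition ld_loss (N M rho sig e T : R) :=
  ln (e / (2 * rho) * T + 1) + ln (T * (2 * N / rho + e / rho ^+ 2))
  + ln (2 * (N * M * T) * sig) + `|ln rho| + rho + 6.

Lemma ld_rate_ge0 (N M rho sig eta : R) : 0 <= N -> 0 <= M -> 0 < rho -> 0 < sig ->
  0 <= eta -> 0 <= ld_rate N M rho sig eta.
Proof.
move=> N0 M0 r0 s0 eta0; have c0 : 0 <= eta / (2 * rho) by rewrite divr_ge0 // mulr_ge0 ?(ltW r0).
have g1 := ln_gap_ge0 rho r0; have g3 := ln_gap_ge0 sig s0.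
have g2 : 0 <= ln_gap rho^-1 by rewrite ln_gap_ge0 ?invr_gt0.
rewrite /ld_rate; have := mulr_ge0 c0 g1; have := mulr_ge0 (addr_ge0 N0 c0) g2.
have := mulr_ge0 (mulr_ge0 N0 M0) g3; lra.
Qed.

Lemma ld_rate_le (N M rho sig eta e : R) : 0 < rho -> eta <= e ->
  ld_rate N M rho sig eta <= ld_rate N M rho sig e.
Proof.
move=> r0 ee; rewrite -subr_ge0.
have -> : ld_rate N M rho sig e - ld_rate N M rho sig eta
          = (e - eta) / (2 * rho) * (ln_gap rho + ln_gap rho^-1) by rewrite /ld_rate; ring.
have g0 : 0 <= ln_gap rho + ln_gap rho^-1 by rewrite addr_ge0 ?ln_gap_ge0 ?invr_gt0.
by rewrite mulr_ge0 // divr_ge0 ?subr_ge0 // mulr_ge0 ?(ltW r0).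
Qed.

(* The box [x0 - 1, x0] x [y0, y0 + 1] of the (numerator, denominator) plane,
   with x0 = 2 hx / rho and y0 = 2 hy sig, keeping only the Poisson term j of
   the numerator density. *)
Lemma p_miss_ge_box (NR Ns L j : nat) (gamma rho sig eta hx hy : R) :
  (1 <= NR)%N -> (2 <= Ns)%N -> 0 < rho -> 0 < sig -> 0 < eta ->
  hx = NR%:R * L.+1%:R + j%:R -> hy = NR%:R * (Ns - 1)%:R * L.+1%:R ->
  j%:R <= L.+1%:R * eta / 2 / rho < j%:R + 1 -> rho + 1 <= hx ->
  2 * hx / rho <= gamma * (2 * hy * sig) ->
  ((expR (- (L.+1%:R * eta / 2 / rho * ln_gap rho) - `|ln rho| - 2
          - ln (L.+1%:R * eta / 2 / rho + 1))
    * expR (- (hx * ln_gap rho^-1) - ln (2 * hx / rho) - rho - 1)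
    * expR (- (hy * ln_gap sig) - ln (2 * hy * sig) - 3 / 2))%:E
   <= p_miss NR Ns L.+1 gamma eta)%E.
Proof.
move=> NR1 Ns2 r0 s0 eta0 hxE hyE jt hx_ge box; rewrite /p_miss.
have n1E : (2 * NR * L.+1 + 2 * j)%:R = 2 * hx by rewrite hxE !natrD !natrM; ring.
have n2E : (2 * NR * L.+1 * (Ns - 1))%:R = 2 * hy by rewrite hyE !natrM; ring.
have hy1 : 1 <= hy.
  by rewrite hyE -!natrM ler1n !muln_gt0 NR1 subn_gt0 Ns2.
have lam0 : 0 < L.+1%:R * eta by rewrite mulr_gt0 ?ltr0n.
have x01 : 1 < 2 * hx / rho by rewrite ltr_pdivlMr //; lra.
have y0_gt0 : 0 < 2 * hy * sig by rewrite !mulr_gt0 //; lra.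
have n1_gt0 : (0 < 2 * NR * L.+1)%N by rewrite !muln_gt0 NR1.
have n2_gt0 : (0 < 2 * NR * L.+1 * (Ns - 1))%N by rewrite !muln_gt0 NR1 subn_gt0.
have chi2_y y : 2 * hy * sig <= y <= 2 * hy * sig + 1 ->
    expR (- (hy * ln_gap sig) - ln (2 * hy * sig) - 3 / 2)
    <= chi2_pdf (2 * NR * L.+1 * (Ns - 1)) y.
  exact: chi2_pdf_ge_right n2E hy1 s0.
have ncchi2_x x : 2 * hx / rho - 1 <= x <= 2 * hx / rho ->
    ((expR (- (L.+1%:R * eta / 2 / rho * ln_gap rho) - `|ln rho| - 2
            - ln (L.+1%:R * eta / 2 / rho + 1))
      * expR (- (hx * ln_gap rho^-1) - ln (2 * hx / rho) - rho - 1))%:E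
     <= ncchi2_pdf (2 * NR * L.+1) (L.+1%:R * eta) x)%E.
  move=> xx; apply: le_trans (ncchi2_pdf_ge_term _ j _ x lam0); rewrite lee_fin.
  apply: ler_pM; rewrite ?expR_ge0 //; first by apply: poisson_pmf_ge; rewrite ?divr_gt0.
  exact: chi2_pdf_ge_left n1E r0 hx_ge xx.
rewrite mulrC; apply: ncF_cdf_ge_box (ltW lam0) x01 y0_gt0 _ _ _ chi2_y ncchi2_x => //.
have -> : (Ns - 1)%:R * gamma * (2 * NR * L.+1)%:R * (2 * hy * sig)
           = gamma * (2 * hy * sig) * (2 * hy) by rewrite hyE !natrM; ring.
by rewrite n2E ler_wpM2r //; lra.
Qed.

Lemma p_miss_ge (NR Ns L : nat) (gamma rho sig e eta : R) :
  (1 <= NR)%N -> (2 <= Ns)%N -> 0 < rho -> 0 < sig -> 0 < eta -> eta <= e ->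
  2 * NR%:R / rho + e / rho ^+ 2 <= gamma * (2 * NR%:R * (Ns - 1)%:R * sig) ->
  rho + 1 <= NR%:R * L.+1%:R ->
  ((expR (- (L.+1%:R * ld_rate NR%:R (Ns - 1)%:R rho sig eta)
          - ld_loss NR%:R (Ns - 1)%:R rho sig e L.+1%:R))%:E
   <= p_miss NR Ns L.+1 gamma eta)%E.
Proof.
move=> NR1 Ns2 r0 s0 eta0 ete feas TN.
set T : R := L.+1%:R; set N : R := NR%:R; set M : R := (Ns - 1)%:R in feas TN *.
have T0 : 0 < T by rewrite ltr0n.
set t := T * eta / 2 / rho; have tE : t = eta / (2 * rho) * T by rewrite /t; field; rewrite gt_eqF.
have ce : eta / (2 * rho) <= e / (2 * rho) by rewrite ler_pM2r ?invr_gt0 ?mulr_gt0.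
have t0 : 0 <= t by rewrite tE mulr_ge0 ?divr_ge0 ?mulr_ge0 ?(ltW eta0) ?(ltW r0) ?(ltW T0).
have tle : t <= e / (2 * rho) * T by rewrite tE ler_pM2r.
set j := Num.Def.trunc t; have /andP[jl ju] := truncn_itv t0; rewrite -natr1 in ju.
set hx := N * T + j%:R; set hy := N * M * T.
have hx_ge : rho + 1 <= hx by rewrite /hx; have := ler0n R j; lra.
have x0_le : 2 * hx / rho <= T * (2 * N / rho + e / rho ^+ 2).
  rewrite ler_pdivrMr //.
  have -> : T * (2 * N / rho + e / rho ^+ 2) * rho = 2 * (N * T + e / (2 * rho) * T).
    by field; rewrite gt_eqF.
  rewrite /hx; lra.
have box : 2 * hx / rho <= gamma * (2 * hy * sig).
  apply: le_trans x0_le _; rewrite [leRHS](_ : _ = T * (gamma * (2 * N * M * sig))).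
    by rewrite ler_pM2l.
  by rewrite /hy; ring.
apply: le_trans _ (p_miss_ge_box _ _ _ _ _ _ _ _ _ _ NR1 Ns2 r0 s0 eta0 erefl erefl _ hx_ge box);
  last by rewrite -/T -/t jl ju.
rewrite -/T -/t -/N -/M -/hx -/hy lee_fin -!expRD ler_expR.
have : hx * ln_gap rho^-1 <= (N * T + t) * ln_gap rho^-1.
  by rewrite ler_wpM2r ?ln_gap_ge0 ?invr_gt0 // /hx; lra.
have x0_gt0 : 0 < 2 * hx / rho by rewrite divr_gt0 //; lra.
have : ln (2 * hx / rho) <= ln (T * (2 * N / rho + e / rho ^+ 2)).
  by rewrite ler_ln ?posrE //; lra.
have : ln (t + 1) <= ln (e / (2 * rho) * T + 1) by rewrite ler_ln ?posrE; lra.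
have -> : T * ld_rate N M rho sig eta
    = t * ln_gap rho + (N * T + t) * ln_gap rho^-1 + hy * ln_gap sig.
  by rewrite tE /ld_rate /hy; ring.
rewrite /ld_loss -/hy; lra.
Qed.

Lemma p_miss_ge0 (NR Ns L : nat) (gamma eta : R) : 0 <= eta ->
  (0 <= p_miss NR Ns L gamma eta)%E.
Proof.
move=> eta0; apply: integral_ge0 => y _; apply: mule_ge0; first by rewrite lee_fin chi2_pdf_ge0.
by apply: integral_ge0 => x _; apply: ncchi2_pdf_ge0; rewrite mulr_ge0.
Qed.

Lemma pbar_miss_ge (NR Ns L : nat) (gamma W : R) (Omega A : set R) (p eta : R -> R) :
  measurable A -> A `<=` Omega -> measurable_fun A p ->
  (forall phi, Omega phi -> 0 <= p phi) -> (forall phi, Omega phi -> 0 <= eta phi) ->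
  0 <= W -> (forall phi, A phi -> (W%:E <= p_miss NR Ns L gamma (eta phi))%E) ->
  (W%:E * \int[mu]_(phi in A) (p phi)%:E <= pbar_miss NR Ns L gamma Omega p eta)%E.
Proof.
move=> mA AO mp p0 eta0 W0 WA; rewrite -ge0_integralZl //; first last.
- by move=> phi /AO /p0; rewrite lee_fin.
- exact/measurable_EFinP.
rewrite /pbar_miss integral_mkcond [leRHS]integral_mkcond.
apply: ge0_le_integral_nomeas => phi _; rewrite /patch.
  by case: ifP => // /[!inE] /AO /p0 p0'; rewrite mule_ge0 ?lee_fin.
case: ifP => [/[!inE] Aphi|_].
  rewrite ifT ?inE; last exact: AO.
  by rewrite lee_pmul ?lee_fin ?p0 ?WA //; exact: AO.
case: ifP => // /[!inE] Ophi.
by rewrite mule_ge0 ?lee_fin ?p0 ?p_miss_ge0 ?eta0.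
Qed.

Lemma pbar_miss_ge_rate (NR Ns L : nat) (gamma rho sig e : R) (Omega A : set R)
    (p eta : R -> R) :
  (1 <= NR)%N -> (2 <= Ns)%N -> 0 < rho -> 0 < sig ->
  2 * NR%:R / rho + e / rho ^+ 2 <= gamma * (2 * NR%:R * (Ns - 1)%:R * sig) ->
  rho + 1 <= L.+1%:R -> measurable A -> A `<=` Omega -> measurable_fun A p ->
  (forall phi, Omega phi -> 0 <= p phi) -> (forall phi, Omega phi -> 0 < eta phi) ->
  (forall phi, A phi -> eta phi <= e) ->
  ((expR (- (L.+1%:R * ld_rate NR%:R (Ns - 1)%:R rho sig e)
          - ld_loss NR%:R (Ns - 1)%:R rho sig e L.+1%:R))%:E
   * \int[mu]_(phi in A) (p phi)%:E <= pbar_miss NR Ns L.+1 gamma Omega p eta)%E.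
Proof.
move=> NR1 Ns2 r0 s0 feas TL mA AO mp p0 eta0 eta_le.
apply: (pbar_miss_ge _ _ _ _ _ _ _ _ _ mA AO mp p0 _ (expR_ge0 _)).
  by move=> phi /eta0 /ltW.
move=> phi Aphi; have TN : rho + 1 <= NR%:R * L.+1%:R.
  have : L.+1%:R <= NR%:R * L.+1%:R :> R by rewrite ler_peMl ?ler0n ?ler1n.
  lra.
apply: le_trans (p_miss_ge _ _ _ _ _ _ _ _ NR1 Ns2 r0 s0 (eta0 _ (AO _ Aphi)) (eta_le _ Aphi)
  feas TN).
rewrite lee_fin ler_expR lerD2r lerN2 ler_wpM2l ?ler0n //.
exact: ld_rate_le r0 (eta_le _ Aphi).
Qed.

(* The root x^* gives the parameters rho = eta / (x^* - N_R) and
   sig = v^* / (2 N_R (N_s - 1)) of [p_miss_ge]: they make its constraint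
   tight, and at this point ld_rate is I^*. *)
Section Istar_optimum.
Variables (NR Ns : nat) (gamma e xs : R).
Hypotheses (NR1 : (1 <= NR)%N) (Ns2 : (2 <= Ns)%N).
Hypotheses (gamma0 : 0 < gamma) (e0 : 0 < e) (xs0 : 0 < xs).
Hypothesis xs_root : (gamma + 1) / (e * gamma) * (xs ^+ 2 - NR%:R ^+ 2) - xs - NR%:R
  - 2 * NR%:R * (Ns - 1)%:R = 0.

Local Notation N := NR%:R.
Local Notation M := (Ns - 1)%:R.
Local Notation vs := ((xs ^+ 2 - N ^+ 2) / (e * gamma)).

Let N_gt0 : 0 < N :> R. Proof. by rewrite ltr0n. Qed.
Let M_gt0 : 0 < M :> R. Proof. by rewrite ltr0n subn_gt0. Qed.

Local Notation rho := (e / (xs - N)).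
Local Notation sig := (vs / (2 * N * M)).

Lemma Istar_vsE : (gamma + 1) * vs = xs + N + 2 * N * M.
Proof.
have -> : (gamma + 1) * vs = (gamma + 1) / (e * gamma) * (xs ^+ 2 - N ^+ 2) by ring.
by move: xs_root; lra.
Qed.

Lemma Istar_vs_gt0 : 0 < vs.
Proof.
have : 0 < (gamma + 1) * vs.
  by rewrite Istar_vsE; have := mulr_gt0 N_gt0 M_gt0; have := N_gt0; have := xs0; lra.
by rewrite pmulr_rgt0 // addr_gt0.
Qed.

Lemma Istar_xs_gt : N < xs.
Proof.
have : 0 < xs ^+ 2 - N ^+ 2.
  by move: Istar_vs_gt0; rewrite pmulr_lgt0 // invr_gt0 mulr_gt0.
by rewrite subr_gt0 ltr_pXn2r ?nnegrE //; have := N_gt0; have := xs0; lra.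
Qed.

Lemma Istar_rho_gt0 : 0 < rho.
Proof. by rewrite divr_gt0 // subr_gt0 Istar_xs_gt. Qed.

Lemma Istar_sig_gt0 : 0 < sig.
Proof. by rewrite divr_gt0 ?Istar_vs_gt0 // !mulr_gt0. Qed.

Lemma Istar_feasible : 2 * N / rho + e / rho ^+ 2 = gamma * (2 * N * M * sig).
Proof.
have xN := Istar_xs_gt; have N0 := N_gt0; have M0 := M_gt0.
by field; rewrite !gt_eqF ?subr_gt0 //; lra.
Qed.

Lemma IstarE : Istar NR Ns e gamma xs = ld_rate N M rho sig e.
Proof.
have xN := Istar_xs_gt; have r0 := Istar_rho_gt0; have s0 := Istar_sig_gt0.
have v0 := Istar_vs_gt0; have vsE := Istar_vsE; have N0 := N_gt0; have M0 := M_gt0.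
rewrite /Istar /=.
have -> : N ^+ 2 + gamma * e * vs = xs ^+ 2 by field; rewrite !gt_eqF.
rewrite sqrtr_sqr ger0_norm; last lra.
have -> : gamma * vs / (N + xs) = rho^-1.
  by rewrite invf_div; field; rewrite !gt_eqF ?subr_gt0 //; lra.
have -> : ln (2 * N * M / vs) = - ln sig.
  by rewrite -invf_div lnV // posrE.
have key : (N + e / (2 * rho)) * (rho^-1 - 1) + N * M * (sig - 1) = 0.
  have -> : (N + e / (2 * rho)) * (rho^-1 - 1) + N * M * (sig - 1)
      = ((gamma + 1) * vs - xs - N - 2 * N * M) / 2.
    by field; rewrite !gt_eqF ?subr_gt0 //; lra.
  by rewrite vsE; field.
rewrite /ld_rate /ln_gap lnV ?posrE //.
have : e / (2 * rho) * rho = e / 2 by field; rewrite !gt_eqF ?subr_gt0.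
have : e / 2 * rho^-1 = e / (2 * rho) by field; rewrite !gt_eqF ?subr_gt0.
lra.
Qed.

End Istar_optimum.

Lemma ld_loss_sublinear (N M rho sig e C eps : R) :
  0 < N -> 0 < M -> 0 < rho -> 0 < sig -> 0 < e -> 0 < eps ->
  \forall n \near \oo, ld_loss N M rho sig e n.+1%:R + C <= eps * n.+1%:R.
Proof.
move=> N0 M0 r0 s0 e0 eps0.
set A := e / (2 * rho) + (2 * N / rho + e / rho ^+ 2) + 2 * N * M * sig.
have a1 : 0 < e / (2 * rho) by rewrite divr_gt0 ?mulr_gt0.
have a2 : 0 < 2 * N / rho + e / rho ^+ 2 by rewrite addr_gt0 ?divr_gt0 ?mulr_gt0 ?exprn_gt0.
have a3 : 0 < 2 * N * M * sig by rewrite !mulr_gt0.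
have A0 : 0 < A by rewrite /A; lra.
set d := eps / (2 * A); have d0 : 0 < d by rewrite divr_gt0 ?mulr_gt0.
set K := 3 * (- 1 - ln d) + d + `|ln rho| + rho + 6 + C.
apply: filterS (nbhs_infty_ger (2 * K / eps)) => n Kn.
set T : R := n.+1%:R; have nT : n%:R + 1 = T by rewrite /T natr1.
have T0 : 0 < T by rewrite /T ltr0n.
have l1 := ln_le_mul d (e / (2 * rho) * T + 1) d0 (ltr_wpDl (ltW (mulr_gt0 a1 T0)) ltr01).
have l2 := ln_le_mul d (T * (2 * N / rho + e / rho ^+ 2)) d0 (mulr_gt0 T0 a2).
have l3 := ln_le_mul d (2 * (N * M * T) * sig) d0 ltac:(by rewrite !mulr_gt0).
have sum : d * (e / (2 * rho) * T + 1) + d * (T * (2 * N / rho + e / rho ^+ 2))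
           + d * (2 * (N * M * T) * sig) = eps / 2 * T + d.
  rewrite [LHS](_ : _ = d * A * T + d); last by rewrite /A; ring.
  by rewrite /d; field; rewrite gt_eqF.
have : K <= eps / 2 * T.
  by move: Kn; rewrite ler_pdivrMr // -nT; nra.
rewrite /ld_loss /K in l1 l2 l3 sum *; lra.
Qed.

Lemma limn_esup_le_eventually (v : nat -> R) (l : R) :
  (forall eps, 0 < eps -> \forall n \near \oo, v n <= l + eps) ->
  (limn_esup (fun n => (v n)%:E) <= l%:E)%E.
Proof.
move=> vl; apply/lee_addgt0Pr => eps /vl [n0 _ n0v].
rewrite limn_esup_lim; apply: lime_le; first exact: is_cvg_esups.
exists n0 => // n /= n0n; apply: ge_ereal_sup => _ [m /= nm <-].
by rewrite lee_fin; apply: n0v; exact: leq_trans n0n nm.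
Qed.

(* fine +oo = 0 and ln 0 = 0, hence the hypothesis 0 <= b. *)
Lemma neg_ln_fine_le (x : \bar R) (w b : R) : 0 < w -> (w%:E <= x)%E ->
  - ln w <= b -> 0 <= b -> - ln (fine x) <= b.
Proof.
move=> w0; case: x => [r| |] //= wx lnb b0; last by rewrite ln0 ?oppr0.
by apply: le_trans lnb; rewrite lerN2 ler_ln ?posrE // (lt_le_trans w0).
Qed.

Lemma gt0_ge_EFin (x : \bar R) : (0 < x)%E -> exists2 r : R, 0 < r & (r%:E <= x)%E.
Proof.
case: x => [r| |] //; first by rewrite lte_fin => r0; exists r.
by exists 1 => //; rewrite leey.
Qed.

Lemma limn_esup_neg_ln_le (u : nat -> \bar R) (w : nat -> R) (I : R) :
  0 <= I -> (forall n, 0 < w n) -> (\forall n \near \oo, ((w n)%:E <= u n)%E) ->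
  (forall eps, 0 < eps -> \forall n \near \oo, - ln (w n) <= (I + eps) * n.+1%:R) ->
  (limn_esup (fun n => (- (ln (fine (u n)) / n.+1%:R))%:E) <= I%:E)%E.
Proof.
move=> I0 w0 wu wI; apply: limn_esup_le_eventually => eps eps0.
apply: filterS2 wu (wI eps eps0) => n wun wn.
rewrite /= -mulNr ler_pdivrMr ?ltr0n //; apply: neg_ln_fine_le (w0 n) wun wn _.
exact: mulr_ge0 (addr_ge0 I0 (ltW eps0)) (ler0n _ _).
Qed.

End estimates.

Theorem proposition4 (R : realType) (NR Ns : nat) (gamma : R)
  (Omega_i : interval R) (p eta : R -> R) (Omega_m : set R) (eta_m xs : R) :
  (1 <= NR)%N -> (2 <= Ns)%N -> 0 < gamma ->
  (* p is a probability density on Omega = [set` Omega_i] *)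
  measurable_fun [set` Omega_i] p ->
  (forall phi, [set` Omega_i] phi -> 0 <= p phi) ->
  (\int[@lebesgue_measure R]_(phi in [set` Omega_i]) (p phi)%:E = 1)%E ->
  (* eta : Omega -> (0, oo) measurable *)
  measurable_fun [set` Omega_i] eta ->
  (forall phi, [set` Omega_i] phi -> 0 < eta phi) ->
  (* the set Omega^- and the bound eta^- *)
  measurable Omega_m -> Omega_m `<=` [set` Omega_i] ->
  0 < eta_m -> (forall phi, Omega_m phi -> eta phi <= eta_m) ->
  (0 < \int[@lebesgue_measure R]_(phi in Omega_m) (p phi)%:E)%E ->
  gamma < (2 * NR%:R + eta_m) / (2 * NR%:R * (Ns - 1)%:R) ->
  (* xs > 0 solves the quadratic defining x^* for eta = eta^- *)
  0 < xs ->
  (gamma + 1) / (eta_m * gamma) * (xs ^+ 2 - NR%:R ^+ 2) - xs - NR%:R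
    - 2 * NR%:R * (Ns - 1)%:R = 0 ->
  (limn_esup (fun L : nat =>
     (- (ln (fine (pbar_miss NR Ns L.+1 gamma [set` Omega_i] p eta)) / L.+1%:R))%:E)
   <= (Istar NR Ns eta_m gamma xs)%:E)%E.
Proof.
move=> NR1 Ns2 gamma0 mp p0 _ _ eta0 mA AO eta_m0 eta_le PA _ xs0 xs_root.
have N0 : 0 < NR%:R :> R by rewrite ltr0n.
have M0 : 0 < (Ns - 1)%:R :> R by rewrite ltr0n subn_gt0.
pose rho := eta_m / (xs - NR%:R).
pose sig := (xs ^+ 2 - NR%:R ^+ 2) / (eta_m * gamma) / (2 * NR%:R * (Ns - 1)%:R).
have rho0 : 0 < rho by apply: (@Istar_rho_gt0 R NR Ns gamma).
have sig0 : 0 < sig by apply: (@Istar_sig_gt0 R NR Ns gamma).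
have feas : 2 * NR%:R / rho + eta_m / rho ^+ 2 <= gamma * (2 * NR%:R * (Ns - 1)%:R * sig).
  by rewrite (@Istar_feasible R NR Ns gamma).
rewrite (@IstarE R NR Ns gamma) //; set I := ld_rate _ _ rho sig eta_m.
have [P P0 PA'] := gt0_ge_EFin _ PA.
apply: (@limn_esup_neg_ln_le _ (fun n => pbar_miss NR Ns n.+1 gamma [set` Omega_i] p eta)
  (fun n => expR (- (n.+1%:R * I) - ld_loss NR%:R (Ns - 1)%:R rho sig eta_m n.+1%:R) * P)).
- exact: ld_rate_ge0 (ltW N0) (ltW M0) rho0 sig0 (ltW eta_m0).
- by move=> n; rewrite mulr_gt0 ?expR_gt0.
- apply: filterS (nbhs_infty_ger (rho + 1)) => n n_ge; rewrite EFinM.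
  have mpA := measurable_funS (measurable_itv Omega_i) AO mp.
  apply: le_trans (lee_pmul _ _ (lexx _) PA') (pbar_miss_ge_rate _ _ _ _ _ _ _ _ _ _ _
    NR1 Ns2 rho0 sig0 feas _ mA AO mpA p0 eta0 eta_le).
  + by rewrite lee_fin expR_ge0.
  + by rewrite lee_fin (ltW P0).
  + by rewrite -natr1; lra.
- move=> eps eps0.
  have := ld_loss_sublinear _ _ _ _ _ (- ln P) _ N0 M0 rho0 sig0 eta_m0 eps0.
  apply: filterS => n /=; rewrite lnM ?posrE ?expR_gt0 // expRK; lra.
Qed.
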